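(* For every integer $r\ge2$, $$ \begin{aligned} \int_0^{\frac\pi2} \theta^{r-2}\log\left(\cos\frac\theta2\right)d\theta &=-\frac{\log2}{r-1}\left(\frac\pi2\right)^{r-1}+(r-2)!\sin\left(\frac{r\pi}{2}\right)\zeta_E(r) \\ &\quad+\sum_{k=0}^{\lfloor \frac{r-2}{2}\rfloor }(-1)^k(2k)!\binom{r-2}{2k}\left(\frac\pi2\right)^{r-2k-2}\beta(2k+2) \\ &\quad+\sum_{k=1}^{\lceil \frac{r-2}2\rceil}\frac{(-1)^{k-1}(2k-1)!}{2^{2k+1}}\binom{r-2}{2k-1}\left(\frac\pi2\right)^{r-2k-1}\zeta_E(2k+1). \end{aligned} $$
   Context: $\zeta_E(s)=\sum_{n=1}^\infty\frac{(-1)^{n+1}}{n^s}=(1-2^{1-s})\zeta(s)$ (alternating zeta function), $\beta(s)=\sum_{n=0}^\infty\frac{(-1)^n}{(2n+1)^s}$ (Dirichlet beta function). $\lfloor\cdot\rfloor$, $\lceil\cdot\rceil$ are floor and ceiling; an empty sum is $0$. *)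

From Stdlib Require Import Reals Arith.
From Coquelicot Require Import Coquelicot.
Open Scope R_scope.

Definition zetaE (s : nat) : R :=
  Series (fun n : nat => (-1) ^ n / (INR (n + 1)) ^ s).

Definition dbeta (s : nat) : R :=
  Series (fun n : nat => (-1) ^ n / (INR (2 * n + 1)) ^ s).

(* With m = r - 2, integrating by parts against q(x) = (x^(m+1) - (PI/2)^(m+1)) / (m+1)
   turns the integral into the integral of q(x) tan(x/2) / 2 over [0, PI/2].  The partial
   sums of sum_n (-1)^n sin((n+1)x) equal tan(x/2)/2 up to (-1)^N sin((N+3/2)x) / (2 cos(x/2)),
   whose integral against a C^1 function is O(1/N); so the integral is the alternating sum of
   the moments of q against sin((n+1)x), which repeated integration by parts evaluates in
   closed form.  Summing over n, the factors cos((n+1)PI/2) and sin((n+1)PI/2) select even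
   and odd n and produce zeta_E and beta, and the boundary term q(0) contributes
   sum_n (-1)^n/(n+1) = ln 2. *)

From Stdlib Require Import Reals Arith Lra Lia.
From Coquelicot Require Import Coquelicot.
Open Scope R_scope.

Lemma sin_sub_PI2 t : sin (t - PI / 2) = - cos t.
Proof. rewrite sin_minus, sin_PI2, cos_PI2; ring. Qed.

Lemma cos_sub_PI2 t : cos (t - PI / 2) = sin t.
Proof. rewrite cos_minus, sin_PI2, cos_PI2; ring. Qed.

Lemma cos_nat_mul_PI k : cos (INR k * PI) = (-1) ^ k.
Proof.
  induction k as [|k IH]; [simpl; rewrite Rmult_0_l, cos_0; ring|].
  rewrite S_INR, Rmult_plus_distr_r, Rmult_1_l, neg_cos, IH; simpl; ring.
Qed.

Lemma sin_nat_mul_PI k : sin (INR k * PI) = 0.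
Proof.
  induction k as [|k IH]; [simpl; rewrite Rmult_0_l, sin_0; ring|].
  rewrite S_INR, Rmult_plus_distr_r, Rmult_1_l, neg_sin, IH; ring.
Qed.

Lemma cos_even_mul_PI2 k : cos (INR (2 * k) * (PI / 2)) = (-1) ^ k.
Proof. rewrite <- cos_nat_mul_PI, mult_INR; f_equal; simpl; field. Qed.

Lemma sin_even_mul_PI2 k : sin (INR (2 * k) * (PI / 2)) = 0.
Proof. rewrite <- (sin_nat_mul_PI k), mult_INR; f_equal; simpl; field. Qed.

Lemma odd_mul_PI2 k : INR (2 * k + 1) * (PI / 2) = INR k * PI + PI / 2.
Proof. rewrite plus_INR, mult_INR; simpl; field. Qed.

Lemma cos_odd_mul_PI2 k : cos (INR (2 * k + 1) * (PI / 2)) = 0.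
Proof. rewrite odd_mul_PI2, cos_plus, cos_PI2, sin_PI2, sin_nat_mul_PI; ring. Qed.

Lemma sin_odd_mul_PI2 k : sin (INR (2 * k + 1) * (PI / 2)) = (-1) ^ k.
Proof. rewrite odd_mul_PI2, sin_plus, cos_PI2, sin_PI2, cos_nat_mul_PI; ring. Qed.

Lemma cos_half_gt0 x : - PI < x < PI -> 0 < cos (x / 2).
Proof. intros Hx; apply cos_gt_0; lra. Qed.

Lemma two_cos_half_mul_alt_sin_sum x N :
  2 * cos (x / 2) * sum_f_R0 (fun n => (-1) ^ n * sin (INR (n + 1) * x)) N
  = sin (x / 2) + (-1) ^ N * sin ((INR N + 3 / 2) * x).
Proof.
  induction N as [|N IH].
  - simpl. replace (1 * x) with x by ring.
    replace ((0 + 3 / 2) * x) with (x + x / 2) by field.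
    assert (sin (x / 2) = sin x * cos (x / 2) - cos x * sin (x / 2))
      by (rewrite <- sin_minus; f_equal; field).
    rewrite sin_plus; lra.
  - assert (prod_to_sum : forall y u, 2 * cos u * sin y = sin (y + u) + sin (y - u)).
    { intros y u; rewrite sin_plus, sin_minus; ring. }
    rewrite tech5, Rmult_plus_distr_l, IH.
    replace (2 * cos (x / 2) * ((-1) ^ S N * sin (INR (S N + 1) * x)))
      with ((-1) ^ S N * (2 * cos (x / 2) * sin (INR (S N + 1) * x))) by ring.
    rewrite prod_to_sum, !plus_INR, !S_INR; simpl.
    replace ((INR N + 1 + (0 + 1)) * x + x / 2) with ((INR N + 1 + 3 / 2) * x) by field.
    replace ((INR N + 1 + (0 + 1)) * x - x / 2) with ((INR N + 3 / 2) * x) by field.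
    ring.
Qed.

Lemma ex_RInt_of_continuous_on (h : R -> R) a b : a <= b ->
  (forall x, a <= x <= b -> continuous h x) -> ex_RInt h a b.
Proof.
  intros Hab Hh. apply (ex_RInt_continuous (V:=R_CompleteNormedModule)).
  rewrite Rmin_left, Rmax_right by exact Hab. exact Hh.
Qed.

Section IntegrationByParts.

Variables (f df g dg : R -> R) (a b : R).
Hypothesis a_le_b : a <= b.
Hypothesis f_derive : forall x, a <= x <= b -> is_derive f x (df x).
Hypothesis g_derive : forall x, a <= x <= b -> is_derive g x (dg x).
Hypothesis df_cont : forall x, a <= x <= b -> continuous df x.
Hypothesis dg_cont : forall x, a <= x <= b -> continuous dg x.

Let f_cont x (Hx : a <= x <= b) : continuous f x :=
  ex_derive_continuous f x (ex_intro _ _ (f_derive x Hx)).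
Let g_cont x (Hx : a <= x <= b) : continuous g x :=
  ex_derive_continuous g x (ex_intro _ _ (g_derive x Hx)).

Lemma RInt_by_parts :
  RInt (fun x => f x * dg x) a b = f b * g b - f a * g a - RInt (fun x => df x * g x) a b.
Proof.
  assert (Hfg : is_RInt (fun x => df x * g x + f x * dg x) a b (f b * g b - f a * g a)).
  { apply (is_RInt_derive (fun x => f x * g x)); rewrite Rmin_left, Rmax_right by exact a_le_b.
    - intros x Hx. exact (is_derive_mult f g x _ _ (f_derive x Hx) (g_derive x Hx)
        ltac:(intros; apply Rmult_comm)).
    - intros x Hx.
      apply (continuous_plus (fun x => df x * g x) (fun x => f x * dg x));
        apply (continuous_mult (K:=R_AbsRing)); auto. }
  assert (Hdfg : ex_RInt (fun x => df x * g x) a b).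
  { apply ex_RInt_of_continuous_on; [exact a_le_b|]. intros x Hx.
    apply (continuous_mult (K:=R_AbsRing)); auto. }
  apply is_RInt_unique.
  eapply is_RInt_ext; [|exact (is_RInt_minus (V:=R_NormedModule) _ _ _ _ _ _ Hfg
                                 (RInt_correct (V:=R_CompleteNormedModule) _ _ _ Hdfg))].
  intros x _. unfold minus, plus, opp; simpl; ring.
Qed.

End IntegrationByParts.

Lemma Rabs_RInt_mul_le (u g : R -> R) a b M : a <= b ->
  (forall x, a <= x <= b -> continuous u x) -> (forall x, a <= x <= b -> continuous g x) ->
  (forall x, a <= x <= b -> Rabs (g x) <= M) ->
  Rabs (RInt (fun x => u x * g x) a b) <= M * RInt (fun x => Rabs (u x)) a b.
Proof.
  intros Hab Hu Hg HM.
  assert (Hug : forall x, a <= x <= b -> continuous (fun y => u y * g y) x)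
    by (intros; apply (continuous_mult (K:=R_AbsRing)); auto).
  eapply Rle_trans;
    [apply abs_RInt_le; [exact Hab|apply ex_RInt_of_continuous_on; auto]|].
  rewrite <- (RInt_scal (V:=R_CompleteNormedModule)).
  - apply RInt_le; [exact Hab| | |].
    + apply ex_RInt_of_continuous_on; [exact Hab|]. intros; apply continuous_Rabs_comp; auto.
    + apply (ex_RInt_scal (V:=R_CompleteNormedModule)).
      apply ex_RInt_of_continuous_on; [exact Hab|]. intros; apply continuous_Rabs_comp; auto.
    + intros x Hx. unfold scal; simpl; unfold mult; simpl.
      rewrite Rabs_mult, Rmult_comm. apply Rmult_le_compat_r; [apply Rabs_pos|]. apply HM; lra.
  - apply ex_RInt_of_continuous_on; [exact Hab|]. intros; apply continuous_Rabs_comp; auto.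
Qed.

Lemma RInt_mul_sin_bound (h dh : R -> R) a b : a <= b ->
  (forall x, a <= x <= b -> is_derive h x (dh x)) ->
  (forall x, a <= x <= b -> continuous dh x) ->
  exists C, forall lam, 0 < lam ->
    Rabs (RInt (fun x => h x * sin (lam * x)) a b) <= C / lam.
Proof.
  intros Hab Hh Hdh.
  exists (Rabs (h b) + Rabs (h a) + RInt (fun x => Rabs (dh x)) a b). intros lam Hlam.
  set (g := fun y => - cos (lam * y) / lam).
  assert (g_cont : forall x, continuous g x).
  { intros x. apply (ex_derive_continuous (V:=R_NormedModule)). unfold g. auto_derive. lra. }
  assert (g_le : forall x, Rabs (g x) <= / lam).
  { intros x. unfold g. rewrite Rabs_div, Rabs_Ropp, (Rabs_right lam) by lra.
    unfold Rdiv. rewrite <- (Rmult_1_l (/ lam)) at 2.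
    apply Rmult_le_compat_r; [apply Rlt_le, Rinv_0_lt_compat; lra|].
    apply Rabs_le, COS_bound. }
  rewrite (RInt_by_parts h dh g (fun y => sin (lam * y)) a b); auto.
  2:{ intros x _. unfold g. auto_derive; [easy|]. field. lra. }
  2:{ intros x _. apply (ex_derive_continuous (V:=R_NormedModule)). auto_derive. easy. }
  assert (Hint := Rabs_RInt_mul_le dh g a b (/ lam) Hab Hdh (fun x _ => g_cont x)
                                   (fun x _ => g_le x)).
  assert (Hb := g_le b). assert (Ha := g_le a).
  assert (0 <= Rabs (h a)) by apply Rabs_pos. assert (0 <= Rabs (h b)) by apply Rabs_pos.
  unfold Rminus. eapply Rle_trans; [apply Rabs_triang|].
  eapply Rle_trans; [apply Rplus_le_compat_r, Rabs_triang|].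
  rewrite !Rabs_Ropp, !Rabs_mult. unfold Rdiv. nra.
Qed.

Lemma INR_succ_gt0 n : 0 < INR (n + 1).
Proof. rewrite plus_INR; simpl; pose proof (pos_INR n); lra. Qed.

Lemma is_lim_seq_inv_succ : is_lim_seq (fun N => / (INR N + 1)) 0.
Proof.
  assert (H : is_lim_seq (fun N => INR N + 1) p_infty).
  { apply is_lim_seq_ext with (fun N => INR (S N)); [intros; apply S_INR|].
    apply -> is_lim_seq_incr_1. exact is_lim_seq_INR. }
  exact (is_lim_seq_inv _ _ H ltac:(discriminate)).
Qed.

Lemma is_lim_seq_of_dist_le (u : nat -> R) l C :
  (forall N, Rabs (u N - l) <= C / (INR N + 1)) -> is_lim_seq u l.
Proof.
  intros Hu.
  assert (HC : is_lim_seq (fun N => C / (INR N + 1)) 0).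
  { replace 0 with (C * 0) by ring. exact (is_lim_seq_scal_l _ C 0 is_lim_seq_inv_succ). }
  apply is_lim_seq_le_le with (fun N => l - C / (INR N + 1)) (fun N => l + C / (INR N + 1)).
  - intros N. specialize (Hu N). apply Rabs_le_between in Hu. lra.
  - replace (Finite l) with (Finite (l - 0)) by (f_equal; ring).
    exact (is_lim_seq_minus' _ _ _ _ (is_lim_seq_const l) HC).
  - replace (Finite l) with (Finite (l + 0)) by (f_equal; ring).
    exact (is_lim_seq_plus' _ _ _ _ (is_lim_seq_const l) HC).
Qed.

Lemma is_RInt_pow_01 n : is_RInt (fun t => t ^ n) 0 1 (/ INR (n + 1)).
Proof.
  assert (Hn := INR_succ_gt0 n).
  replace (/ INR (n + 1)) with (1 ^ (n + 1) / INR (n + 1) - 0 ^ (n + 1) / INR (n + 1))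
    by (rewrite pow1, pow_i by lia; field; lra).
  apply (is_RInt_derive (fun t => t ^ (n + 1) / INR (n + 1))).
  - intros x _. auto_derive; [easy|].
    replace (pred (n + 1)) with n by lia. field. lra.
  - intros x _. apply (ex_derive_continuous (V:=R_NormedModule)). auto_derive. easy.
Qed.

Lemma is_RInt_inv_one_plus : is_RInt (fun t => / (1 + t)) 0 1 (ln 2).
Proof.
  replace (ln 2) with (ln (1 + 1) - ln (1 + 0))
    by (rewrite Rplus_0_r, ln_1; replace (1 + 1) with 2 by ring; ring).
  apply (is_RInt_derive (fun t => ln (1 + t))); rewrite Rmin_left, Rmax_right by lra.
  - intros x Hx. auto_derive; [lra|]. field. lra.
  - intros x Hx. apply (ex_derive_continuous (V:=R_NormedModule)). auto_derive. lra.
Qed.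

Lemma alt_harmonic_partial_sum N :
  sum_f_R0 (fun n => (-1) ^ n / INR (n + 1)) N
  = ln 2 - RInt (fun t => (- t) ^ (N + 1) * / (1 + t)) 0 1.
Proof.
  assert (Hsum : is_RInt (fun t => sum_f_R0 (fun n => (-1) ^ n * t ^ n) N) 0 1
                         (sum_f_R0 (fun n => (-1) ^ n / INR (n + 1)) N)).
  { induction N as [|N IH].
    - exact (is_RInt_scal (V:=R_NormedModule) _ _ _ _ _ (is_RInt_pow_01 0)).
    - apply (is_RInt_plus (V:=R_NormedModule)); [exact IH|].
      apply (is_RInt_scal (V:=R_NormedModule)), is_RInt_pow_01. }
  assert (Hrem : ex_RInt (fun t => (- t) ^ (N + 1) * / (1 + t)) 0 1).
  { apply ex_RInt_of_continuous_on; [lra|]. intros t Ht.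
    apply (ex_derive_continuous (V:=R_NormedModule)). auto_derive. lra. }
  rewrite <- (is_RInt_unique _ _ _ _ Hsum). apply is_RInt_unique.
  eapply is_RInt_ext; [|exact (is_RInt_minus (V:=R_NormedModule) _ _ _ _ _ _ is_RInt_inv_one_plus
                                 (RInt_correct (V:=R_CompleteNormedModule) _ _ _ Hrem))].
  rewrite Rmin_left, Rmax_right by lra. intros x Hx. unfold minus, plus, opp; simpl.
  assert (Hgeom := GP_finite (- x) N).
  replace (sum_f_R0 (fun n => (-1) ^ n * x ^ n) N) with (sum_f_R0 (fun n => (- x) ^ n) N)
    by (apply sum_eq; intros i _; rewrite <- Rpow_mult_distr; f_equal; ring).
  apply (Rmult_eq_reg_r (- x - 1)); [rewrite Hgeom; field|]; lra.
Qed.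

Lemma is_series_alt_harmonic : is_series (fun n => (-1) ^ n / INR (n + 1)) (ln 2).
Proof.
  apply (is_lim_seq_of_dist_le _ _ 1). intros N.
  rewrite sum_n_Reals, alt_harmonic_partial_sum.
  replace (ln 2 - _ - ln 2) with (- RInt (fun t => (- t) ^ (N + 1) * / (1 + t)) 0 1) by ring.
  rewrite Rabs_Ropp.
  eapply Rle_trans; [apply (Rabs_RInt_mul_le _ _ _ _ 1); [lra| | |]|].
  - intros t _. apply (ex_derive_continuous (V:=R_NormedModule)). auto_derive. easy.
  - intros t Ht. apply (ex_derive_continuous (V:=R_NormedModule)). auto_derive. lra.
  - intros t Ht. rewrite Rabs_inv, Rabs_right by lra. rewrite <- Rinv_1.
    apply Rinv_le_contravar; lra.
  - rewrite Rmult_1_l, (RInt_ext _ (fun t => t ^ (N + 1))).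
    + rewrite (is_RInt_unique _ _ _ _ (is_RInt_pow_01 (N + 1))).
      unfold Rdiv. rewrite Rmult_1_l. apply Rinv_le_contravar; [pose proof (pos_INR N); lra|].
      rewrite !plus_INR; simpl; lra.
    + rewrite Rmin_left, Rmax_right by lra. intros t Ht.
      rewrite <- RPow_abs, Rabs_Ropp, Rabs_right by lra. reflexivity.
Qed.

Lemma ex_series_inv_sqr : ex_series (fun n => / INR (n + 1) ^ 2).
Proof.
  assert (telescope : is_lim_seq (sum_n (fun n => / INR (n + 1) - / INR (n + 2))) 1).
  { apply is_lim_seq_ext with (fun N => 1 - / (INR (S N) + 1)).
    - intros N. rewrite sum_n_Reals. induction N as [|N IH]; [simpl; field|].
      rewrite tech5, <- IH, !plus_INR, !S_INR. simpl. field.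
      pose proof (pos_INR N). split; lra.
    - replace (Finite 1) with (Finite (1 - 0)) by (f_equal; ring).
      apply is_lim_seq_minus'; [apply is_lim_seq_const|].
      exact (proj1 (is_lim_seq_incr_1 (fun N => / (INR N + 1)) 0) is_lim_seq_inv_succ). }
  apply (ex_series_le (V:=R_CompleteNormedModule))
    with (fun n => 2 * (/ INR (n + 1) - / INR (n + 2))).
  - intros n. unfold norm; simpl. rewrite !plus_INR. simpl. pose proof (pos_INR n).
    rewrite Rabs_right by (apply Rle_ge, Rlt_le, Rinv_0_lt_compat; nra).
    replace (2 * (/ (INR n + 1) - / (INR n + (1 + 1))))
      with (/ ((INR n + 1) * (INR n + 2) / 2)) by (field; lra).
    apply Rinv_le_contravar; nra.
  - eexists. exact (is_series_scal_l 2 _ _ telescope).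
Qed.

Lemma ex_series_bounded_div_pow (c y : nat -> R) s : (2 <= s)%nat ->
  (forall n, Rabs (c n) <= 1) -> (forall n, INR (n + 1) <= y n) ->
  ex_series (fun n => c n / y n ^ s).
Proof.
  intros Hs Hc Hy.
  apply (ex_series_le (V:=R_CompleteNormedModule)) with (fun n => / INR (n + 1) ^ 2);
    [|exact ex_series_inv_sqr].
  intros n. change (Rabs (c n / y n ^ s) <= / INR (n + 1) ^ 2).
  assert (Hn : 1 <= INR (n + 1)) by (rewrite plus_INR; simpl; pose proof (pos_INR n); lra).
  assert (Hyn := Hy n).
  assert (Hpow : INR (n + 1) ^ 2 <= y n ^ s).
  { apply Rle_trans with (y n ^ 2); [apply pow_incr; lra|apply Rle_pow; [lra|exact Hs]]. }
  assert (0 < INR (n + 1) ^ 2) by (apply pow_lt; lra).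
  rewrite Rabs_div, (Rabs_right (y n ^ s))
    by (try apply Rle_ge; apply pow_le || apply pow_nonzero; lra).
  unfold Rdiv. rewrite <- (Rmult_1_l (/ INR (n + 1) ^ 2)).
  apply Rmult_le_compat; [apply Rabs_pos|apply Rlt_le, Rinv_0_lt_compat; lra|apply Hc|].
  apply Rinv_le_contravar; lra.
Qed.

Lemma is_series_of_odd_partial_sums (c : nat -> R) (l : R) : ex_series c ->
  is_lim_seq (fun K => sum_n c (2 * K + 1)) l -> is_series c l.
Proof.
  intros [l' Hl'] Hodd.
  assert (Hsub : is_lim_seq (fun K => sum_n c (2 * K + 1)) l').
  { apply (is_lim_seq_subseq (sum_n c) l' (fun K => 2 * K + 1)%nat); [|exact Hl'].
    apply eventually_subseq. intros; lia. }
  assert (E : Finite l' = Finite l) by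
    (rewrite <- (is_lim_seq_unique _ _ Hsub); exact (is_lim_seq_unique _ _ Hodd)).
  injection E as ->. exact Hl'.
Qed.

Lemma is_series_sum_f_R0 (f : nat -> nat -> R) (l : nat -> R) M :
  (forall j, (j <= M)%nat -> is_series (f j) (l j)) ->
  is_series (fun n => sum_f_R0 (fun j => f j n) M) (sum_f_R0 l M).
Proof.
  induction M as [|M IH]; intros Hf; [apply Hf; lia|].
  apply (is_series_plus (V:=R_NormedModule)); [apply IH; intros; apply Hf; lia|apply Hf; lia].
Qed.

Lemma sum_f_R0_even_odd (u : nat -> R) m :
  sum_f_R0 u m
  = sum_n (fun i => u (2 * i)%nat) (m / 2) + sum_n_m (fun i => u (2 * i - 1)%nat) 1 (S m / 2).
Proof.
  assert (Heven : forall k, sum_f_R0 u (2 * k)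
    = sum_n (fun i => u (2 * i)%nat) k + sum_n_m (fun i => u (2 * i - 1)%nat) 1 k).
  { induction k as [|k IH].
    { rewrite sum_O, sum_n_m_zero by lia. simpl. unfold zero; simpl. ring. }
    replace (2 * S k)%nat with (S (S (2 * k))) by lia.
    rewrite !tech5, IH, sum_Sn, sum_n_Sm by lia.
    replace (2 * S k - 1)%nat with (S (2 * k)) by lia.
    replace (2 * S k)%nat with (S (S (2 * k))) by lia. unfold plus; simpl; ring. }
  destruct (Nat.Even_or_Odd m) as [[k ->]|[k ->]].
  - rewrite <- (Nat.div_unique (2 * k) 2 k 0), <- (Nat.div_unique (S (2 * k)) 2 k 1) by lia.
    apply Heven.
  - rewrite <- (Nat.div_unique (2 * k + 1) 2 k 1), <- (Nat.div_unique (S (2 * k + 1)) 2 (S k) 0)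
      by lia.
    replace (2 * k + 1)%nat with (S (2 * k)) by lia.
    rewrite tech5, Heven, sum_n_Sm by lia.
    replace (2 * S k - 1)%nat with (S (2 * k)) by lia. unfold plus; simpl; ring.
Qed.

Lemma Rabs_sign_mul_le_1 (t : R) n : Rabs t <= 1 -> Rabs ((-1) ^ n * t) <= 1.
Proof. intros Ht. rewrite Rabs_mult, pow_1_abs, Rmult_1_l. exact Ht. Qed.

Lemma ex_series_zetaE s : (2 <= s)%nat -> ex_series (fun n => (-1) ^ n / INR (n + 1) ^ s).
Proof.
  intros Hs. apply (ex_series_bounded_div_pow (fun n => (-1) ^ n) (fun n => INR (n + 1)));
    [exact Hs| |intros; lra].
  intros n. rewrite pow_1_abs. lra.
Qed.

Lemma ex_series_dbeta s : (2 <= s)%nat -> ex_series (fun n => (-1) ^ n / INR (2 * n + 1) ^ s).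
Proof.
  intros Hs. apply (ex_series_bounded_div_pow (fun n => (-1) ^ n) (fun n => INR (2 * n + 1)));
    [exact Hs| |intros; apply le_INR; lia].
  intros n. rewrite pow_1_abs. lra.
Qed.

Lemma is_series_cos_PI2 s : (2 <= s)%nat ->
  is_series (fun n => (-1) ^ n * cos (INR (n + 1) * (PI / 2)) / INR (n + 1) ^ s)
            (zetaE s / 2 ^ s).
Proof.
  intros Hs. apply is_series_of_odd_partial_sums.
  { apply (ex_series_bounded_div_pow _ (fun n => INR (n + 1))); [exact Hs| |intros; lra].
    intros n. apply Rabs_sign_mul_le_1, Rabs_le, COS_bound. }
  apply is_lim_seq_ext with (fun K => / 2 ^ s * sum_n (fun n => (-1) ^ n / INR (n + 1) ^ s) K).
  - intros K. rewrite !sum_n_Reals. induction K as [|K IH].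
    + simpl. replace (1 * (PI / 2)) with (PI / 2) by ring.
      replace ((1 + 1) * (PI / 2)) with PI by field. rewrite cos_PI2, cos_PI, pow1.
      replace (1 + 1) with 2 by ring. field. apply pow_nonzero; lra.
    + replace (2 * S K + 1)%nat with (S (S (2 * K + 1))) by lia.
      rewrite !tech5, <- IH.
      replace (S (2 * K + 1) + 1)%nat with (2 * (K + 1) + 1)%nat by lia.
      replace (S (S (2 * K + 1)) + 1)%nat with (2 * (K + 2))%nat by lia.
      rewrite cos_odd_mul_PI2, cos_even_mul_PI2, mult_INR, Rpow_mult_distr.
      replace (S K + 1)%nat with (K + 2)%nat by lia.
      replace (S (S (2 * K + 1))) with (S (2 * (K + 1))) by lia.
      rewrite pow_1_odd. replace (K + 2)%nat with (S (S K)) by lia.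
      replace ((-1) ^ S (S K)) with ((-1) ^ K) by (simpl; ring).
      replace ((-1) ^ S K) with (-1 * (-1) ^ K) by (simpl; ring).
      change (INR 2) with 2. field.
      repeat split; apply pow_nonzero; try lra; apply not_0_INR; lia.
  - unfold Rdiv. rewrite Rmult_comm.
    apply (is_lim_seq_scal_l _ _ (zetaE s)). exact (Series_correct _ (ex_series_zetaE s Hs)).
Qed.

Lemma is_series_sin_PI2 s : (2 <= s)%nat ->
  is_series (fun n => (-1) ^ n * sin (INR (n + 1) * (PI / 2)) / INR (n + 1) ^ s) (dbeta s).
Proof.
  intros Hs. apply is_series_of_odd_partial_sums.
  { apply (ex_series_bounded_div_pow _ (fun n => INR (n + 1))); [exact Hs| |intros; lra].
    intros n. apply Rabs_sign_mul_le_1, Rabs_le, SIN_bound. }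
  apply is_lim_seq_ext with (sum_n (fun n => (-1) ^ n / INR (2 * n + 1) ^ s)).
  - intros K. rewrite !sum_n_Reals. induction K as [|K IH].
    + simpl. replace (1 * (PI / 2)) with (PI / 2) by ring.
      replace ((1 + 1) * (PI / 2)) with PI by field. rewrite sin_PI2, sin_PI, pow1.
      field. apply pow_nonzero; lra.
    + replace (2 * S K + 1)%nat with (S (S (2 * K + 1))) by lia.
      rewrite !tech5, <- IH.
      replace (S (2 * K + 1) + 1)%nat with (2 * (K + 1) + 1)%nat by lia.
      replace (S (S (2 * K + 1)) + 1)%nat with (2 * (K + 2))%nat by lia.
      rewrite sin_odd_mul_PI2, sin_even_mul_PI2.
      replace (S (2 * K + 1)) with (2 * (K + 1))%nat by lia.
      rewrite pow_1_even. replace (S K) with (K + 1)%nat by lia.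
      field. split; apply pow_nonzero, not_0_INR; lia.
  - exact (Series_correct _ (ex_series_dbeta s Hs)).
Qed.

(* Repeated integration by parts: an antiderivative of [cos (nu x - phi)] is
   [cos (nu x - (phi + PI/2)) / nu], so each step shifts the phase by PI/2. *)
Fixpoint pow_cos_antider (m : nat) (nu phi x : R) : R :=
  match m with
  | O => cos (nu * x - phi - PI / 2) / nu
  | S k => x ^ S k * cos (nu * x - phi - PI / 2) / nu
           - INR (S k) / nu * pow_cos_antider k nu (phi + PI / 2) x
  end.

Lemma is_derive_pow_cos_antider m nu phi x : nu <> 0 ->
  is_derive (pow_cos_antider m nu phi) x (x ^ m * cos (nu * x - phi)).
Proof.
  intros Hnu. revert phi. induction m as [|m IH]; intros phi.
  - simpl. auto_derive; [easy|].
    replace (nu * x + - phi + - (PI / 2)) with (nu * x - phi - PI / 2) by ring.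
    rewrite sin_sub_PI2. field. exact Hnu.
  - specialize (IH (phi + PI / 2)). simpl pow_cos_antider.
    auto_derive; [eexists; exact IH|].
    match goal with |- context [Derive ?f x] =>
      rewrite (is_derive_unique f x _ IH) end.
    change (match m with 0%nat => 1 | S _ => INR m + 1 end) with (INR (S m)).
    replace (nu * x + - phi + - (PI / 2)) with (nu * x - phi - PI / 2) by ring.
    replace (nu * x - (phi + PI / 2)) with (nu * x - phi - PI / 2) by ring.
    rewrite sin_sub_PI2, cos_sub_PI2.
    destruct m; simpl; field; exact Hnu.
Qed.

Lemma pow_cos_antider_0 m nu phi : nu <> 0 ->
  pow_cos_antider m nu phi 0
  = (-1) ^ m * INR (fact m) * cos (- phi - INR (m + 1) * (PI / 2)) / nu ^ (m + 1).
Proof.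
  intros Hnu. revert phi. induction m as [|m IH]; intros phi.
  - simpl. replace (nu * 0 - phi - PI / 2) with (- phi - 1 * (PI / 2)) by ring.
    field. exact Hnu.
  - simpl pow_cos_antider.
    change (match m with 0%nat => 1 | S _ => INR m + 1 end) with (INR (S m)).
    rewrite IH.
    replace (- (phi + PI / 2) - INR (m + 1) * (PI / 2))
      with (- phi - INR (S m + 1) * (PI / 2)) by (rewrite !plus_INR, !S_INR; simpl; ring).
    rewrite fact_simpl, mult_INR, S_INR. simpl pow.
    field. split; [apply pow_nonzero|]; exact Hnu.
Qed.

Lemma pow_cos_antider_sum m nu phi x : nu <> 0 ->
  pow_cos_antider m nu phi x
  = sum_f_R0 (fun j => (-1) ^ j * (INR (fact m) / INR (fact (m - j))) * x ^ (m - j)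
                       * cos (nu * x - phi - INR (j + 1) * (PI / 2)) / nu ^ (j + 1)) m.
Proof.
  intros Hnu. revert phi. induction m as [|m IH]; intros phi.
  - simpl. replace (nu * x - phi - 1 * (PI / 2)) with (nu * x - phi - PI / 2) by ring.
    field. exact Hnu.
  - simpl pow_cos_antider.
    change (match m with 0%nat => 1 | S _ => INR m + 1 end) with (INR (S m)).
    rewrite IH, (decomp_sum _ (S m)) by lia. simpl pred.
    unfold Rminus at 1. f_equal.
    + rewrite Nat.sub_0_r. simpl pow. change (INR (0 + 1)) with 1.
      replace (nu * x - phi - 1 * (PI / 2))
        with (nu * x - phi - PI / 2) by ring.
      field. split; [apply INR_fact_neq_0|exact Hnu].
    + rewrite Ropp_mult_distr_l, scal_sum. apply sum_eq. intros i Hi.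
      replace (S m - S i)%nat with (m - i)%nat by lia.
      replace (nu * x - (phi + PI / 2) - INR (i + 1) * (PI / 2))
        with (nu * x - phi - INR (S i + 1) * (PI / 2)) by (rewrite !plus_INR, !S_INR; simpl; ring).
      rewrite fact_simpl, mult_INR, S_INR. simpl pow.
      field. repeat split; [apply INR_fact_neq_0 | apply pow_nonzero | ]; exact Hnu.
Qed.

Section AltSinExpansion.

Variables (f df : R -> R) (a : R).
Hypothesis a_ge0 : 0 <= a.
Hypothesis a_ltPI : a < PI.
Hypothesis f_derive : forall x, 0 <= x <= a -> is_derive f x (df x).
Hypothesis df_cont : forall x, 0 <= x <= a -> continuous df x.

Let cos_half_pos x (Hx : 0 <= x <= a) : 0 < cos (x / 2).
Proof. apply cos_half_gt0; lra. Qed.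

Let f_cont x (Hx : 0 <= x <= a) : continuous f x :=
  ex_derive_continuous f x (ex_intro _ _ (f_derive x Hx)).

Let smooth_cont (g : R -> R) x : (forall y, ex_derive g y) -> continuous g x.
Proof. intros Hg. apply (ex_derive_continuous (V:=R_NormedModule)), Hg. Qed.

Let ex_RInt_f_mul (g : R -> R) : (forall x, 0 <= x <= a -> continuous g x) ->
  ex_RInt (fun x => f x * g x) 0 a.
Proof.
  intros Hg. apply ex_RInt_of_continuous_on; [exact a_ge0|]. intros x Hx.
  apply (continuous_mult (K:=R_AbsRing)); auto.
Qed.

Let is_RInt_alt_sin_sum N :
  is_RInt (fun x => sum_f_R0 (fun n => (-1) ^ n * (f x * sin (INR (n + 1) * x))) N) 0 a
          (sum_f_R0 (fun n => (-1) ^ n * RInt (fun x => f x * sin (INR (n + 1) * x)) 0 a) N).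
Proof.
  assert (Hn : forall n, is_RInt (fun x => (-1) ^ n * (f x * sin (INR (n + 1) * x))) 0 a
                           ((-1) ^ n * RInt (fun x => f x * sin (INR (n + 1) * x)) 0 a)).
  { intros n. apply (is_RInt_scal (V:=R_NormedModule)), (RInt_correct (V:=R_CompleteNormedModule)).
    apply ex_RInt_f_mul. intros x _. apply smooth_cont. intros; auto_derive; easy. }
  induction N as [|N IH]; [apply Hn|].
  apply (is_RInt_plus (V:=R_NormedModule)); [exact IH|apply Hn].
Qed.

Let h (x : R) : R := f x / (2 * cos (x / 2)).

Let dh (x : R) : R := (df x * (2 * cos (x / 2)) + f x * sin (x / 2)) * / (2 * cos (x / 2)) ^ 2.

Let h_derive x : 0 <= x <= a -> is_derive h x (dh x).
Proof.
  intros Hx. assert (Hc := cos_half_pos x Hx). unfold h, dh.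
  auto_derive; [repeat split; [eexists; apply f_derive, Hx|lra]|].
  match goal with |- context [Derive ?g x] => rewrite (is_derive_unique g x _ (f_derive x Hx)) end.
  change (x * / 2) with (x / 2). field. lra.
Qed.

Let dh_cont x : 0 <= x <= a -> continuous dh x.
Proof.
  intros Hx. assert (Hc := cos_half_pos x Hx). unfold dh.
  apply (continuous_mult (K:=R_AbsRing)); [apply (continuous_plus (V:=R_NormedModule))|].
  - apply (continuous_mult (K:=R_AbsRing)); [auto|apply smooth_cont; intros; auto_derive; easy].
  - apply (continuous_mult (K:=R_AbsRing)); [auto|apply smooth_cont; intros; auto_derive; easy].
  - apply (ex_derive_continuous (V:=R_NormedModule)). auto_derive. nra.
Qed.

Let RInt_alt_sin_partial_sum N :
  sum_f_R0 (fun n => (-1) ^ n * RInt (fun x => f x * sin (INR (n + 1) * x)) 0 a) N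
  = RInt (fun x => f x * (sin (x / 2) / (2 * cos (x / 2)))) 0 a
    + (-1) ^ N * RInt (fun x => h x * sin ((INR N + 3 / 2) * x)) 0 a.
Proof.
  rewrite <- (is_RInt_unique _ _ _ _ (is_RInt_alt_sin_sum N)).
  apply is_RInt_unique.
  apply (is_RInt_ext (fun x => f x * (sin (x / 2) / (2 * cos (x / 2)))
                               + (-1) ^ N * (h x * sin ((INR N + 3 / 2) * x)))).
  { rewrite Rmin_left, Rmax_right by exact a_ge0. intros x Hx.
    assert (Hc := cos_half_pos x ltac:(lra)).
    replace (sum_f_R0 (fun n => (-1) ^ n * (f x * sin (INR (n + 1) * x))) N)
      with (f x * sum_f_R0 (fun n => (-1) ^ n * sin (INR (n + 1) * x)) N)
      by (rewrite scal_sum; apply sum_eq; intros; ring).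
    replace (sum_f_R0 (fun n => (-1) ^ n * sin (INR (n + 1) * x)) N)
      with ((sin (x / 2) + (-1) ^ N * sin ((INR N + 3 / 2) * x)) / (2 * cos (x / 2)))
      by (rewrite <- two_cos_half_mul_alt_sin_sum; field; lra).
    unfold h. change (?u = ?v) with (@eq R u v). field. lra. }
  apply (is_RInt_plus (V:=R_NormedModule)).
  - apply (RInt_correct (V:=R_CompleteNormedModule)), ex_RInt_f_mul.
    intros x Hx. assert (Hc := cos_half_pos x Hx).
    apply (ex_derive_continuous (V:=R_NormedModule)). auto_derive. lra.
  - apply (is_RInt_scal (V:=R_NormedModule)), (RInt_correct (V:=R_CompleteNormedModule)).
    apply ex_RInt_of_continuous_on; [exact a_ge0|]. intros x Hx.
    apply (continuous_mult (K:=R_AbsRing)); [|apply smooth_cont; intros; auto_derive; easy].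
    apply (ex_derive_continuous (V:=R_NormedModule)). eexists. apply h_derive, Hx.
Qed.

(* A weak form of [tan (x/2) / 2 = sum_n (-1)^n sin ((n+1) x)] on [0, a]. *)
Lemma is_series_alt_sin_moments :
  is_series (fun n => (-1) ^ n * RInt (fun x => f x * sin (INR (n + 1) * x)) 0 a)
            (RInt (fun x => f x * (sin (x / 2) / (2 * cos (x / 2)))) 0 a).
Proof.
  destruct (RInt_mul_sin_bound h dh 0 a a_ge0 h_derive dh_cont) as [C HC].
  assert (C_ge0 : 0 <= C).
  { specialize (HC 1 Rlt_0_1). pose proof (Rabs_pos (RInt (fun x => h x * sin (1 * x)) 0 a)).
    lra. }
  apply (is_lim_seq_of_dist_le _ _ C). intros N.
  rewrite sum_n_Reals, RInt_alt_sin_partial_sum.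
  replace (_ + (-1) ^ N * _ - _)
    with ((-1) ^ N * RInt (fun x => h x * sin ((INR N + 3 / 2) * x)) 0 a) by ring.
  rewrite Rabs_mult, pow_1_abs, Rmult_1_l.
  eapply Rle_trans; [apply HC; pose proof (pos_INR N); lra|].
  apply Rmult_le_compat_l; [exact C_ge0|]. apply Rinv_le_contravar; pose proof (pos_INR N); lra.
Qed.

End AltSinExpansion.

Definition pow_antider (m : nat) (a x : R) : R := (x ^ (m + 1) - a ^ (m + 1)) / INR (m + 1).

Lemma is_derive_pow_antider m a x : is_derive (pow_antider m a) x (x ^ m).
Proof.
  assert (Hm := INR_succ_gt0 m). unfold pow_antider. auto_derive; [lra|].
  replace (pred (m + 1)) with m by lia. field. lra.
Qed.

Lemma RInt_pow_ln_cos_half m a : 0 <= a < PI ->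
  RInt (fun t => t ^ m * ln (cos (t / 2))) 0 a
  = RInt (fun x => pow_antider m a x * (sin (x / 2) / (2 * cos (x / 2)))) 0 a.
Proof.
  intros Ha.
  assert (Hc : forall x, 0 <= x <= a -> 0 < cos (x / 2)) by (intros; apply cos_half_gt0; lra).
  rewrite (RInt_ext _ (fun t => ln (cos (t / 2)) * t ^ m))
    by (intros; apply Rmult_comm).
  rewrite (RInt_by_parts _ (fun x => - (sin (x / 2) / (2 * cos (x / 2)))) (pow_antider m a)).
  - unfold pow_antider at 1. rewrite Rminus_diag, Rdiv_0_l, Rmult_0_r.
    rewrite Rdiv_0_l, cos_0, ln_1, Rmult_0_l, !Rminus_0_l.
    rewrite (RInt_ext _ (fun x => opp (pow_antider m a x * (sin (x / 2) / (2 * cos (x / 2))))))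
      by (intros; unfold opp; simpl; ring).
    rewrite (RInt_opp (V:=R_CompleteNormedModule)); [unfold opp; simpl; ring|].
    apply ex_RInt_of_continuous_on; [lra|]. intros x Hx. assert (Hcx := Hc x Hx).
    apply (ex_derive_continuous (V:=R_NormedModule)), ex_derive_mult;
      [eexists; apply is_derive_pow_antider|auto_derive; lra].
  - lra.
  - intros x Hx. assert (Hcx := Hc x Hx). auto_derive; [lra|].
    change (x * / 2) with (x / 2). field. lra.
  - intros x _. apply is_derive_pow_antider.
  - intros x Hx. assert (Hcx := Hc x Hx).
    apply (ex_derive_continuous (V:=R_NormedModule)). auto_derive. lra.
  - intros x _. apply (ex_derive_continuous (V:=R_NormedModule)). auto_derive. easy.
Qed.

Lemma RInt_pow_antider_mul_sin m a nu : nu <> 0 ->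
  RInt (fun x => pow_antider m a x * sin (nu * x)) 0 a
  = (pow_cos_antider m nu 0 a - pow_cos_antider m nu 0 0 + pow_antider m a 0) / nu.
Proof.
  intros Hnu. apply is_RInt_unique.
  set (G := fun x => (pow_cos_antider m nu 0 x - pow_antider m a x * cos (nu * x)) / nu).
  replace ((pow_cos_antider m nu 0 a - pow_cos_antider m nu 0 0 + pow_antider m a 0) / nu)
    with (G a - G 0).
  2:{ unfold G, pow_antider. rewrite Rminus_diag, Rmult_0_r, cos_0.
      field. split; [apply Rgt_not_eq, INR_succ_gt0|exact Hnu]. }
  apply (is_RInt_derive G).
  - intros x _. assert (HP := is_derive_pow_cos_antider m nu 0 x Hnu).
    assert (Hq := is_derive_pow_antider m a x). unfold G.
    auto_derive; [repeat split; eexists; eauto|].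
    match goal with |- context [Derive ?g x] => rewrite (is_derive_unique g x _ HP) end.
    match goal with |- context [Derive ?g x] => rewrite (is_derive_unique g x _ Hq) end.
    rewrite Rminus_0_r. field. exact Hnu.
  - intros x _. apply (ex_derive_continuous (V:=R_NormedModule)).
    apply (ex_derive_mult (pow_antider m a)); [eexists; apply is_derive_pow_antider|].
    auto_derive. easy.
Qed.

Lemma is_series_RInt_pow_ln_cos_half m a : 0 <= a < PI ->
  is_series (fun n => (-1) ^ n / INR (n + 1) *
               (pow_cos_antider m (INR (n + 1)) 0 a - pow_cos_antider m (INR (n + 1)) 0 0
                + pow_antider m a 0))
            (RInt (fun t => t ^ m * ln (cos (t / 2))) 0 a).
Proof.
  intros Ha. rewrite RInt_pow_ln_cos_half by exact Ha.
  eapply is_series_ext; [|apply (is_series_alt_sin_moments _ (fun x => x ^ m))].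
  - intros n. simpl. rewrite RInt_pow_antider_mul_sin by apply Rgt_not_eq, INR_succ_gt0.
    field. apply Rgt_not_eq, INR_succ_gt0.
  - lra.
  - lra.
  - intros x _. apply is_derive_pow_antider.
  - intros x _. apply (ex_derive_continuous (V:=R_NormedModule)). auto_derive. easy.
Qed.

(* The [j]-th term of [pow_cos_antider_sum] at [x = PI/2], summed over the frequencies
   [nu = n + 1] with the weights [(-1)^n / nu]. *)
Definition moment_term (m j : nat) : R :=
  (-1) ^ j * (INR (fact m) / INR (fact (m - j))) * (PI / 2) ^ (m - j) *
  (cos (INR (j + 1) * (PI / 2)) * (zetaE (j + 2) / 2 ^ (j + 2))
   + sin (INR (j + 1) * (PI / 2)) * dbeta (j + 2)).

Lemma is_series_pow_cos_antider_PI2 m :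
  is_series (fun n => (-1) ^ n / INR (n + 1) * pow_cos_antider m (INR (n + 1)) 0 (PI / 2))
            (sum_f_R0 (moment_term m) m).
Proof.
  eapply is_series_ext; [|apply (is_series_sum_f_R0 (fun j n =>
    (-1) ^ j * (INR (fact m) / INR (fact (m - j))) * (PI / 2) ^ (m - j) *
    (cos (INR (j + 1) * (PI / 2))
       * ((-1) ^ n * cos (INR (n + 1) * (PI / 2)) / INR (n + 1) ^ (j + 2))
     + sin (INR (j + 1) * (PI / 2))
       * ((-1) ^ n * sin (INR (n + 1) * (PI / 2)) / INR (n + 1) ^ (j + 2)))))].
  - intros n. simpl. rewrite pow_cos_antider_sum by apply Rgt_not_eq, INR_succ_gt0.
    rewrite scal_sum. apply sum_eq. intros j _.
    rewrite Rminus_0_r, cos_minus. replace (j + 2)%nat with (S (j + 1)) by lia. simpl pow.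
    assert (INR (n + 1) <> 0) by apply Rgt_not_eq, INR_succ_gt0.
    field. split; [|split; [apply INR_fact_neq_0|apply pow_nonzero]]; assumption.
  - intros j _. apply (is_series_scal_l (V:=R_NormedModule)).
    apply (is_series_plus (V:=R_NormedModule)); apply (is_series_scal_l (V:=R_NormedModule)).
    + apply is_series_cos_PI2; lia.
    + apply is_series_sin_PI2; lia.
Qed.

Lemma sign_mul_cos_succ_PI2 m :
  (-1) ^ m * cos (INR (m + 1) * (PI / 2)) = - sin (INR (m + 2) * (PI / 2)).
Proof.
  destruct (Nat.Even_or_Odd m) as [[k ->]|[k ->]].
  - replace (2 * k + 2)%nat with (2 * (k + 1))%nat by lia.
    rewrite cos_odd_mul_PI2, sin_even_mul_PI2. ring.
  - replace (2 * k + 1 + 1)%nat with (2 * (k + 1))%nat by lia.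
    replace (2 * k + 1 + 2)%nat with (2 * (k + 1) + 1)%nat by lia.
    rewrite cos_even_mul_PI2, sin_odd_mul_PI2, pow_add, pow_1_even. ring.
Qed.

Lemma is_series_pow_cos_antider_0 m :
  is_series (fun n => (-1) ^ n / INR (n + 1) * pow_cos_antider m (INR (n + 1)) 0 0)
            (- (INR (fact m) * sin (INR (m + 2) * (PI / 2)) * zetaE (m + 2))).
Proof.
  replace (- (INR (fact m) * sin (INR (m + 2) * (PI / 2)) * zetaE (m + 2)))
    with ((-1) ^ m * INR (fact m) * cos (INR (m + 1) * (PI / 2)) * zetaE (m + 2))
    by (rewrite (Rmult_comm _ (INR (fact m))), 2!Rmult_assoc, <- (Rmult_assoc ((-1) ^ m)),
          sign_mul_cos_succ_PI2; ring).
  eapply is_series_ext;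
    [|exact (is_series_scal_l _ _ _ (Series_correct _ (ex_series_zetaE (m + 2) ltac:(lia))))].
  intros n. simpl. rewrite pow_cos_antider_0 by apply Rgt_not_eq, INR_succ_gt0.
  replace (- 0 - INR (m + 1) * (PI / 2)) with (- (INR (m + 1) * (PI / 2))) by ring.
  rewrite cos_neg. replace (m + 2)%nat with (S (m + 1)) by lia. simpl pow.
  unfold scal; simpl; unfold mult; simpl.
  field. split; [apply pow_nonzero|]; apply Rgt_not_eq, INR_succ_gt0.
Qed.

Lemma RInt_pow_ln_cos_half_PI2 m :
  RInt (fun t => t ^ m * ln (cos (t / 2))) 0 (PI / 2)
  = - ln 2 / INR (m + 1) * (PI / 2) ^ (m + 1)
    + INR (fact m) * sin (INR (m + 2) * (PI / 2)) * zetaE (m + 2)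
    + sum_f_R0 (moment_term m) m.
Proof.
  assert (HPI := PI_RGT_0).
  rewrite <- (is_series_unique _ _ (is_series_RInt_pow_ln_cos_half m (PI / 2) ltac:(lra))).
  replace (_ + _ + sum_f_R0 (moment_term m) m)
    with (sum_f_R0 (moment_term m) m
          - - (INR (fact m) * sin (INR (m + 2) * (PI / 2)) * zetaE (m + 2))
          + pow_antider m (PI / 2) 0 * ln 2)
    by (unfold pow_antider; rewrite pow_i by lia; field; apply Rgt_not_eq, INR_succ_gt0).
  apply is_series_unique.
  eapply is_series_ext; [|apply (is_series_plus (V:=R_NormedModule));
    [apply (is_series_minus (V:=R_NormedModule));
       [apply is_series_pow_cos_antider_PI2|apply is_series_pow_cos_antider_0]
    |apply (is_series_scal_l (V:=R_NormedModule)), is_series_alt_harmonic]].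
  intros n. unfold plus, minus, opp, scal; simpl; unfold mult; simpl. field.
  apply Rgt_not_eq, INR_succ_gt0.
Qed.

Lemma moment_term_even m k : (2 * k <= m)%nat ->
  moment_term m (2 * k) = (-1) ^ k * INR (fact (2 * k)) * Binomial.C m (2 * k)
                          * (PI / 2) ^ (m - 2 * k) * dbeta (2 * k + 2).
Proof.
  intros Hk. unfold moment_term, Binomial.C.
  rewrite cos_odd_mul_PI2, sin_odd_mul_PI2, pow_1_even.
  field. repeat split; try apply INR_fact_neq_0; apply pow_nonzero; lra.
Qed.

Lemma moment_term_odd m k : (1 <= k)%nat -> (2 * k - 1 <= m)%nat ->
  moment_term m (2 * k - 1)
  = (-1) ^ (k - 1) * INR (fact (2 * k - 1)) / 2 ^ (2 * k + 1) * Binomial.C m (2 * k - 1)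
    * (PI / 2) ^ (m - (2 * k - 1)) * zetaE (2 * k + 1).
Proof.
  intros Hk1 Hkm. destruct k as [|k]; [lia|].
  replace (2 * S k - 1)%nat with (2 * k + 1)%nat by lia.
  replace (S k - 1)%nat with k by lia.
  replace (2 * S k + 1)%nat with (2 * k + 1 + 2)%nat by lia.
  unfold moment_term, Binomial.C.
  replace (2 * k + 1 + 1)%nat with (2 * (k + 1))%nat by lia.
  rewrite cos_even_mul_PI2, sin_even_mul_PI2, !pow_add, pow_1_even.
  field. repeat split; try apply INR_fact_neq_0; apply pow_nonzero; lra.
Qed.

Theorem theorem2p3 (r : nat) (hr : (2 <= r)%nat) :
  RInt (fun t => t ^ (r - 2) * ln (cos (t / 2))) 0 (PI / 2) =
    - ln 2 / INR (r - 1) * (PI / 2) ^ (r - 1)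
    + INR (fact (r - 2)) * sin (INR r * PI / 2) * zetaE r
    + sum_n (fun k => (-1) ^ k * INR (fact (2 * k)) * Binomial.C (r - 2) (2 * k)
                      * (PI / 2) ^ (r - 2 * k - 2) * dbeta (2 * k + 2))
            ((r - 2) / 2)
    + sum_n_m (fun k => (-1) ^ (k - 1) * INR (fact (2 * k - 1)) / 2 ^ (2 * k + 1)
                        * Binomial.C (r - 2) (2 * k - 1)
                        * (PI / 2) ^ (r - 2 * k - 1) * zetaE (2 * k + 1))
              1 ((r - 1) / 2).
Proof.
  destruct r as [|[|m]]; [lia|lia|].
  replace (S (S m) - 2)%nat with m by lia. replace (S (S m) - 1)%nat with (m + 1)%nat by lia.
  rewrite RInt_pow_ln_cos_half_PI2, sum_f_R0_even_odd.
  replace (m + 2)%nat with (S (S m)) by lia.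
  replace (INR (S (S m)) * (PI / 2)) with (INR (S (S m)) * PI / 2) by field.
  rewrite (sum_n_ext_loc _ (fun k => (-1) ^ k * INR (fact (2 * k)) * Binomial.C m (2 * k)
                                     * (PI / 2) ^ (S (S m) - 2 * k - 2) * dbeta (2 * k + 2))).
  2:{ intros k Hk. rewrite moment_term_even by (pose proof (Nat.Div0.mul_div_le m 2); lia).
      do 3 f_equal. lia. }
  rewrite (sum_n_m_ext_loc _ (fun k => (-1) ^ (k - 1) * INR (fact (2 * k - 1)) / 2 ^ (2 * k + 1)
                                       * Binomial.C m (2 * k - 1)
                                       * (PI / 2) ^ (S (S m) - 2 * k - 1) * zetaE (2 * k + 1))).
  2:{ intros k Hk. rewrite moment_term_odd by (pose proof (Nat.Div0.mul_div_le (S m) 2); lia).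
      do 3 f_equal. lia. }
  replace (S m) with (m + 1)%nat by lia. change (?u = ?v) with (@eq R u v). ring.
Qed.
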